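(* Let $M\in\mathbb{N}$, $N\ge0$, and let $\mathcal{G}=(\mathcal{V},\mathcal{E})$ be a countable connected graph of bounded maximal degree. Then $A_N\le 2MV_N$ as operators on $\ell^2(\mathfrak{M}_N)$. Moreover, for any $\mathcal{V}'\subset\mathfrak{M}_N$, letting $A_N'$ be the weighted adjacency operator on the subgraph of $\mathcal{G}^{M,N}$ induced by $\mathcal{V}'$ (i.e. $(A_N'f)(\mathfrak{m})=\sum_{\mathfrak{n}\in\mathcal{V}',\,\mathfrak{n}\sim\mathfrak{m}}w(\mathfrak{m},\mathfrak{n})f(\mathfrak{n})$ for $f\in\ell^2(\mathcal{V}')$, $\mathfrak{m}\in\mathcal{V}'$), we have $A_N'\le 2MV_N\restriction_{\ell^2(\mathcal{V}')}$.
   Context: $\mathfrak{M}_N$ is the set of finitely supported functions $\mathfrak{m}:\mathcal{V}\to\{0,1,\dots,M\}$ with $\sum_x\mathfrak{m}(x)=N$. The graph $\mathcal{G}^{M,N}$ has vertex set $\mathfrak{M}_N$, with $\mathfrak{m}\sim\mathfrak{n}$ iff there is an edge $\{x_+,x_-\}\in\mathcal{E}$ with $\mathfrak{m}(x_\pm)=\mathfrak{n}(x_\pm)\pm1$ and $\mathfrak{m}(z)=\mathfrak{n}(z)$ for all other $z$. For $\mathfrak{m}\sim\mathfrak{n}$, $w(\mathfrak{m},\mathfrak{n})=\prod_{x:\mathfrak{m}(x)\neq\mathfrak{n}(x)}\big(\frac{M}{2}(\mathfrak{m}(x)+\mathfrak{n}(x)+1)-\mathfrak{m}(x)\mathfrak{n}(x)\big)^{1/2}$.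 $(A_Nf)(\mathfrak{m})=\sum_{\mathfrak{n}\sim\mathfrak{m}}w(\mathfrak{m},\mathfrak{n})f(\mathfrak{n})$ and $V_N$ is multiplication by $V_N(\mathfrak{m})=\sum_{\{x,y\}\in\mathcal{E}}\big(\frac{M}{2}(\mathfrak{m}(x)+\mathfrak{m}(y))-\mathfrak{m}(x)\mathfrak{m}(y)\big)$. *)

From HB Require Import structures.
From mathcomp Require Import all_boot all_order all_algebra finmap.
From mathcomp Require Import all_classical all_reals all_analysis.
From mathcomp Require Import complex.
Import numFieldNormedType.Exports.
Import Order.TTheory GRing.Theory Num.Theory.

Set Implicit Arguments.
Unset Strict Implicit.
Unset Printing Implicit Defensive.

Local Open Scope classical_set_scope.
Local Open Scope ring_scope.
Local Open Scope fset_scope.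

(* The complex numbers C = R[i] over a real type R, seen as a numeric closed
   field (so that it carries conjugation, sqrtC, the partial order of
   numeric fields, and the norm topology provided by MathComp-Analysis). *)
Definition Cc (R : realType) : numClosedFieldType := (R[i] : numClosedFieldType).

(* Unordered (net) sums over a choiceType: limit of finite partial sums
   along the filter of finite subsets directed by inclusion. *)
Definition totally {I : choiceType} : set_system {fset I} :=
  filter_from setT (fun A => [set B | A `<=` B]).

Instance totally_filter {I : choiceType} : ProperFilter (@totally I).
Proof.
eapply filter_from_proper; last by move=> A _; exists A; rewrite /= fsubset_refl.
apply: filter_fromT_filter; first by exists fset0.
by move=> A B /=; exists (A `|` B) => P /=; rewrite fsubUset => /andP[].
Qed.

Definition psum {I : choiceType} {K : numFieldType} (x : I -> K) (A : {fset I}) : K :=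
  \sum_(i <- A) x i.

Definition usum {I : choiceType} {K : numFieldType} (x : I -> K) : K :=
  lim (fmap (psum x) totally).

Definition ell2_on {I : choiceType} {K : numClosedFieldType} (S : set I) (f : I -> K) : Prop :=
  cvg (fmap (psum (fun i => if `[< S i >] then `|f i| ^+ 2 else 0)) totally).

Section Configurations.
Variables (V : countType) (M N : nat).

Definition is_config (m : {fsfun V -> nat with 0%N}) : bool :=
  all (fun x => m x <= M)%N (finsupp m) && (\sum_(x <- finsupp m) m x == N)%N.

Definition config := {m : {fsfun V -> nat with 0%N} | is_config m}.

Definition cval (m : config) : V -> nat := fun x => (val m) x.

End Configurations.

Section Operators.
Variables (R : realType) (V : countType) (e : rel V) (M N : nat).
Local Notation K := (Cc R).
Local Notation cfg := (config V M N).

Definition cadj (m n : cfg) : Prop :=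
  exists xp xm : V, e xp xm /\
    cval m xp = (cval n xp).+1 /\ (cval m xm).+1 = cval n xm /\
    (forall z, z != xp -> z != xm -> cval m z = cval n z).

Definition weight (m n : cfg) : K :=
  \prod_(x <- finsupp (val m) `|` finsupp (val n) | cval m x != cval n x)
     sqrtC ((M%:R / 2) * (cval m x + cval n x + 1)%:R - (cval m x * cval n x)%:R).

Definition adjop (S : set cfg) (f : cfg -> K) (m : cfg) : K :=
  usum (fun n => if `[< S n /\ cadj m n >] then weight m n * f n else 0).

Definition A_N (f : cfg -> K) (m : cfg) : K :=
  usum (fun n => if `[< cadj m n >] then weight m n * f n else 0).

(* V_N(m) = sum over unordered edges {x,y} of (M/2 (m x + m y) - m x m y);
   written as half the sum over ordered pairs (x,y) with e x y *)
Definition V_N (m : cfg) : K :=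
  2^-1 * usum (fun p : V * V => if e p.1 p.2 then
       (M%:R / 2) * (cval m p.1 + cval m p.2)%:R - (cval m p.1 * cval m p.2)%:R
     else 0).

(* quadratic forms <f, A f> and <f, V f> on l^2(S) (inner product
   antilinear in the first slot); f is only evaluated on S *)
Definition qform_A (f : cfg -> K) : K :=
  usum (fun m => (f m)^* * A_N f m).

Definition qform_V (f : cfg -> K) : K :=
  usum (fun m => (f m)^* * (V_N m * f m)).

Definition qform_adjop (S : set cfg) (f : cfg -> K) : K :=
  usum (fun m => if `[< S m >] then (f m)^* * adjop S f m else 0).

Definition qform_V_on (S : set cfg) (f : cfg -> K) : K :=
  usum (fun m => if `[< S m >] then (f m)^* * (V_N m * f m) else 0).

End Operators.

Definition simple_graph {V : countType} (e : rel V) : Prop :=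
  (forall x y, e x y = e y x) /\ (forall x, ~~ e x x).

Definition connected_graph {V : countType} (e : rel V) : Prop :=
  forall x y : V, exists p : seq V, path e x p /\ last x p = y.

Definition bounded_degree {V : countType} (e : rel V) : Prop :=
  exists D : nat, forall x : V, exists s : seq V,
    (size s <= D)%N /\ (forall y, e x y -> y \in s).

From HB Require Import structures.
From mathcomp Require Import all_boot all_order all_algebra finmap.
From mathcomp Require Import all_classical all_reals all_analysis.
From mathcomp Require Import complex.
From mathcomp Require Import ring lra zify.
Import numFieldNormedType.Exports.
Import Order.TTheory GRing.Theory Num.Theory.

(* The weighted adjacency operator A_N has the kernel k(m, n) = w(m, n), which is
   nonnegative, symmetric and has finitely many nonzero entries in each row, so the Schur
   test bounds <f, A_N f> by sum_m rho(m) |f m|^2, where rho is the row sum of k.  A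
   configuration adjacent to m is obtained by moving a particle along an edge x -> y, and
   then w(m, n) <= M m(x) (M - m(y)); since V_N(m) = 1/2 sum_(x ~ y) m(x) (M - m(y)),
   summing over ordered edges gives rho <= 2 M V_N.  The sums over configurations are
   limits of finite partial sums, so their convergence is part of the argument: V_N is
   bounded (at most N particles, bounded degree), hence sum V_N |f|^2 converges for f in
   l^2.  The induced-subgraph case is the full case applied to f extended by zero. *)

Set Implicit Arguments.
Unset Strict Implicit.
Unset Printing Implicit Defensive.

Local Open Scope classical_set_scope.
Local Open Scope ring_scope.

Section SupportSums.
Variables (K : numDomainType) (T : eqType).
Implicit Types (r : seq T) (h : T -> K).

Lemma eq_sum_support r1 r2 h :
  uniq r1 -> uniq r2 -> (forall i, h i != 0 -> (i \in r1) = (i \in r2)) ->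
  \sum_(i <- r1) h i = \sum_(i <- r2) h i.
Proof.
move=> u1 u2 h12.
have nz r : \sum_(i <- r) h i = \sum_(i <- [seq i <- r | h i != 0]) h i.
  by rewrite big_filter [RHS]big_mkcond; apply: eq_bigr => i _; case: eqP.
rewrite nz [RHS]nz; apply/perm_big/uniq_perm; rewrite ?filter_uniq // => i.
by rewrite !mem_filter; case: (boolP (h i != 0)) => //= /h12.
Qed.

Lemma ler_sum_support r1 r2 h :
  uniq r1 -> uniq r2 -> (forall i, 0 <= h i) ->
  (forall i, i \in r1 -> h i != 0 -> i \in r2) ->
  \sum_(i <- r1) h i <= \sum_(i <- r2) h i.
Proof.
move=> u1 u2 h0 h12.
rewrite (@eq_sum_support r1 [seq i <- r2 | i \in r1]) ?filter_uniq //; last first.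
  by move=> i hi; rewrite mem_filter; case: (boolP (i \in r1)) => //= /h12 ->.
by rewrite big_filter [leRHS](bigID (mem r1)) /= lerDl sumr_ge0.
Qed.

Lemma ler_sum_undup r h : (forall i, 0 <= h i) ->
  \sum_(i <- undup r) h i <= \sum_(i <- r) h i.
Proof.
move=> h0; elim: r => [|x r IH] //=; rewrite big_cons.
by case: ifP => _; rewrite ?big_cons ?lerD // -[leLHS]add0r lerD.
Qed.

End SupportSums.

Section UnorderedSums.
Variables (K : numFieldType) (I : choiceType).
Implicit Types (x h : I -> K) (A B : {fset I}).

Lemma near_totally (P : {fset I} -> Prop) A :
  (forall B, (A `<=` B)%fset -> P B) -> \forall B \near totally, P B.
Proof. by exists A. Qed.

Lemma psum_subset_le h A B : (forall i, 0 <= h i) ->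
  (A `<=` B)%fset -> psum h A <= psum h B.
Proof.
move=> h0 /fsubsetP AB.
by apply: ler_sum_support (fset_uniq _) (fset_uniq _) h0 _ => i /AB.
Qed.

Lemma usum_seq x (r : seq I) : uniq r -> (forall i, x i != 0 -> i \in r) ->
  usum x = \sum_(i <- r) x i.
Proof.
move=> ur xr; set A := seq_fset tt r.
have -> : \sum_(i <- r) x i = psum x A.
  by apply: eq_sum_support; rewrite ?fset_uniq // => i _; rewrite seq_fsetE.
apply: cvg_lim; first exact: norm_hausdorff.
apply/cvgrPdist_lt => eps eps_gt0; apply: (near_totally (A := A)) => B AB.
rewrite /psum -(big_fset_incl _ AB) ?subrr ?normr0 // => i _.
by rewrite seq_fsetE; apply: contraNeq => /xr.
Qed.

Lemma usumZl (c : K) x : cvg (psum x @ totally) ->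
  usum (fun i => c * x i) = c * usum x.
Proof.
move=> xcvg; rewrite /usum.
have -> : psum (fun i => c * x i) = (fun A => c * psum x A).
  by apply/funext => A; rewrite /psum mulr_sumr.
by apply: cvg_lim; [exact: norm_hausdorff | exact: cvgM (cvg_cst c) xcvg].
Qed.

Lemma lim_totally_le (u v : {fset I} -> K) (a b : K) :
  u @ totally --> a -> v @ totally --> b ->
  (\forall B \near totally, u B <= v B) -> a <= b.
Proof.
move=> ua vb uv.
have vu_ba : (v - u) @ totally --> b - a by apply: cvgB.
have near_norm : {near totally, (fun B => `|(v - u) B|) =1 (v - u)}.
  by apply: filterS uv => B /=; rewrite -subr_ge0 => /ger0_norm.
have vu_norm : (v - u) @ totally --> `|b - a|.
  by apply: cvg_trans (cvg_norm vu_ba); exact: near_eq_cvg.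
by rewrite -subr_ge0 -(cvg_unique _ vu_norm vu_ba).
Qed.

Lemma psum_le_lim h (L : K) : (forall i, 0 <= h i) -> psum h @ totally --> L ->
  forall B, psum h B <= L.
Proof.
move=> h0 hL B; apply: (lim_totally_le (cvg_cst (psum h B)) hL).
by apply: (near_totally (A := B)) => B'; exact: psum_subset_le.
Qed.

Lemma psumU h A D : (forall i, i \in D -> i \notin A) ->
  psum h (A `|` D)%fset = psum h A + psum h D.
Proof.
move=> DA; rewrite /psum -big_cat; apply/perm_big/uniq_perm.
- exact: fset_uniq.
- by rewrite cat_uniq !fset_uniq /= andbT; apply/hasPn => i /DA.
- by move=> i; rewrite in_fsetU mem_cat.
Qed.

Lemma psum_tail_lt h (L : K) : (forall i, 0 <= h i) -> psum h @ totally --> L ->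
  forall d, 0 < d -> exists A, forall D, (forall i, i \in D -> i \notin A) ->
  psum h D < d.
Proof.
move=> h0 hL d d_gt0; have /cvgrPdist_lt/(_ d d_gt0) [A _ nearL] := hL.
exists A => D DA; apply: le_lt_trans (nearL A (fsubset_refl A)).
have le_L := psum_le_lim h0 hL (A `|` D)%fset; rewrite psumU // in le_L.
have L_ge0 : 0 <= L by have := psum_le_lim h0 hL fset0; rewrite /psum big_seq_fset0.
have L_real : L - psum h A \is Num.real by rewrite rpredB ?ger0_real ?sumr_ge0.
by apply: le_trans (real_ler_norm L_real); rewrite lerBrDl.
Qed.

End UnorderedSums.

Section ComplexUnorderedSums.
Variables (R : realType) (I : choiceType).
Local Notation C := (Cc R).
Local Open Scope complex_scope.
Implicit Types (x h : I -> C) (c : C).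

Lemma normc_real (y : R) : `|y%:C| = `|y|%:C :> C.
Proof. by rewrite normc_def /= expr0n addr0 sqrtr_sqr. Qed.

Lemma normc_ge_Im (z : C) : `|complex.Im z|%:C <= `|z|.
Proof.
rewrite normc_def lecR -sqrtr_sqr ler_sqrt ?addr_ge0 ?sqr_ge0 //.
by rewrite lerDr sqr_ge0.
Qed.

Lemma cvg_psum_ge0 h c : (forall i, 0 <= h i) -> (forall B, psum h B <= c) ->
  cvg (psum h @ totally).
Proof.
move=> h0 hc.
have psum_ge0 B : 0 <= psum h B by apply: sumr_ge0.
pose E := [set complex.Re (psum h B) | B in [set: {fset I}]].
have E_sup : has_sup E.
  split; first by exists (complex.Re (psum h fset0)), fset0.
  exists (complex.Re c) => _ [B _ <-].
  by have := hc B; rewrite lecE => /andP[].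
apply/cvg_ex; exists (sup E)%:C; apply/cvgrPdist_lt => eps eps_gt0.
have Reeps_gt0 : 0 < complex.Re eps by move: eps_gt0; rewrite ltcE => /andP[].
have [_ [B0 _ <-] B0_sup] := sup_adherent Reeps_gt0 E_sup.
apply: (near_totally (A := B0)) => B B0B.
have le_B0B : complex.Re (psum h B0) <= complex.Re (psum h B).
  by have := psum_subset_le h0 B0B; rewrite lecE => /andP[].
have le_sup : complex.Re (psum h B) <= sup E by apply: sup_upper_bound => //; exists B.
rewrite -(RRe_real (ger0_real (psum_ge0 B))) -(RRe_real (ger0_real (ltW eps_gt0))).
rewrite -rmorphB normc_real ltcR ger0_norm ?subr_ge0 //; lra.
Qed.

Lemma cvg_psum_dominated_real x (y : I -> R) c :
  (forall i, `|y i|%:C <= `|x i|) -> (forall B, psum (fun i => `|x i|) B <= c) ->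
  cvg (psum (fun i => (y i)%:C) @ totally).
Proof.
move=> yx xc.
pose yp i := ((`|y i| + y i) / 2)%:C; pose yn i := ((`|y i| - y i) / 2)%:C.
have dom (z : I -> C) : (forall i, 0 <= z i <= `|x i|) -> cvg (psum z @ totally).
  move=> zx; apply: (cvg_psum_ge0 (c := c)) => [i|B]; first by case/andP: (zx i).
  by apply: le_trans (xc B); apply: ler_sum => i _; case/andP: (zx i).
have in_range (a : R) i : 0 <= a <= `|y i| -> 0 <= a%:C <= `|x i|.
  by case/andP=> a0 ay; rewrite ler0c a0 /=; apply: le_trans (yx i); rewrite lecR.
have -> : psum (fun i => (y i)%:C) = psum yp - psum yn.
  apply/funext => B; rewrite /psum !fctE -sumrB; apply: eq_bigr => i _.
  by rewrite -rmorphB; congr _%:C; field.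
have yi_le i : y i <= `|y i| /\ - y i <= `|y i|.
  by rewrite -[X in _ /\ _ <= X]normrN !ler_norm.
by apply: is_cvgB; apply: dom => i; apply: in_range; case: (yi_le i) => *; lra.
Qed.

Lemma cvg_psum_norm x c : (forall B, psum (fun i => `|x i|) B <= c) ->
  cvg (psum x @ totally).
Proof.
move=> xc.
have -> : psum x = psum (fun i => (complex.Re (x i))%:C)
                   + (fun=> 'i) \* psum (fun i => (complex.Im (x i))%:C).
  apply/funext => B; rewrite /psum !fctE /GRing.mul_fun mulr_sumr -big_split /=.
  by apply: eq_bigr => i _; rewrite -complexE.
apply: is_cvgD; first exact: cvg_psum_dominated_real (fun i => normc_ge_Re _) xc.
apply: is_cvgM; first exact: is_cvg_cst.
exact: cvg_psum_dominated_real (fun i => normc_ge_Im _) xc.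
Qed.

Lemma cvg_psum_mul_bounded (g h : I -> C) c : 0 <= c -> (forall i, 0 <= g i <= c) ->
  (forall i, 0 <= h i) -> cvg (psum h @ totally) ->
  cvg (psum (fun i => g i * h i) @ totally).
Proof.
move=> c_ge0 gc h0 h_cvg.
apply: (cvg_psum_ge0 (c := c * lim (psum h @ totally))) => [i|B].
  by case/andP: (gc i) => g0 _; exact: mulr_ge0.
apply: (@le_trans _ _ (c * psum h B)); last exact/ler_wpM2l/psum_le_lim.
rewrite /psum mulr_sumr; apply: ler_sum => i _.
by rewrite ler_wpM2r //; case/andP: (gc i).
Qed.

End ComplexUnorderedSums.

Lemma real_mul_le_mean_sqr (F : numFieldType) (x y : F) :
  x \is Num.real -> y \is Num.real -> x * y <= (x ^+ 2 + y ^+ 2) / 2.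
Proof.
move=> xr yr; rewrite -subr_ge0.
have -> : (x ^+ 2 + y ^+ 2) / 2 - x * y = (x - y) ^+ 2 / 2 by field.
by rewrite divr_ge0 ?ler0n // -realEsqr rpredB.
Qed.

Section SchurTest.
Variables (R : realType) (I : choiceType).
Local Notation C := (Cc R).
Variables (k : I -> I -> C) (nb : I -> seq I) (u : I -> C).
Hypothesis k_ge0 : forall m n, 0 <= k m n.
Hypothesis k_sym : forall m n, k m n = k n m.
Hypothesis nb_uniq : forall m, uniq (nb m).
Hypothesis k_nb : forall m n, k m n != 0 -> n \in nb m.
Hypothesis rowsum_le : forall m, \sum_(n <- nb m) k m n <= u m.

Let kh_nb (h : I -> C) m n : k m n * h n != 0 -> n \in nb m.
Proof. by rewrite mulf_eq0 negb_or => /andP[/k_nb]. Qed.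

Lemma colsum_le (X E : seq I) (h : I -> C) : uniq X -> uniq E ->
  (forall n, 0 <= h n) -> (forall m n, m \in X -> k m n * h n != 0 -> n \in E) ->
  \sum_(m <- X) \sum_(n <- nb m) k m n * h n <= \sum_(n <- E) u n * h n.
Proof.
move=> uX uE h0 XE.
have -> : \sum_(m <- X) \sum_(n <- nb m) k m n * h n
        = \sum_(m <- X) \sum_(n <- E) k m n * h n.
  rewrite big_seq [RHS]big_seq; apply: eq_bigr => m mX.
  by apply: eq_sum_support => // n khn; rewrite (XE m n mX khn) (kh_nb khn).
rewrite exchange_big; apply: ler_sum => n _.
under eq_bigr do rewrite k_sym.
rewrite -mulr_suml ler_wpM2r // (le_trans _ (rowsum_le n)) //.
by apply: ler_sum_support => // m _ /k_nb.
Qed.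

Lemma sum_nb_le (X E : seq I) (g h : I -> C) : uniq X -> uniq E ->
  (forall n, 0 <= g n) -> (forall n, 0 <= h n) ->
  (forall m n, m \in X -> k m n * h n != 0 -> n \in E) ->
  \sum_(m <- X) \sum_(n <- nb m) k m n * (g m + h n)
    <= \sum_(m <- X) u m * g m + \sum_(n <- E) u n * h n.
Proof.
move=> uX uE g0 h0 XE.
under eq_bigr do rewrite (eq_bigr _ (fun n _ => mulrDr _ _ _)) big_split /=.
rewrite big_split /= lerD ?colsum_le //.
by apply: ler_sum => m _; rewrite -mulr_suml ler_wpM2r.
Qed.

Variable f : I -> C.
Hypothesis uq_cvg : cvg (psum (fun m => u m * `|f m| ^+ 2) @ totally).

Let q m := `|f m| ^+ 2.
Let entry m n := (f m)^* * (k m n * f n).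
Let qf m := (f m)^* * \sum_(n <- nb m) k m n * f n.
Let uq m := u m * q m.

Let u_ge0 m : 0 <= u m.
Proof. exact: le_trans (sumr_ge0 _ (fun n _ => k_ge0 m n)) (rowsum_le m). Qed.

Let q_ge0 m : 0 <= q m. Proof. exact: exprn_ge0. Qed.

Let uq_ge0 m : 0 <= uq m. Proof. exact: mulr_ge0 (u_ge0 m) (q_ge0 m). Qed.

Let psum_uq_le_lim B : psum uq B <= lim (psum uq @ totally).
Proof. exact: psum_le_lim uq_ge0 uq_cvg B. Qed.

Let norm_entry_le m n : `|entry m n| <= k m n * ((q m + q n) / 2).
Proof.
rewrite /entry !normrM norm_conjC (ger0_norm (k_ge0 m n)) mulrCA ler_wpM2l //.
by apply: real_mul_le_mean_sqr; apply: ger0_real.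
Qed.

Let norm_entry_le_sum m n : `|entry m n| <= k m n * (q m + q n).
Proof.
apply: le_trans (norm_entry_le m n) (ler_wpM2l (k_ge0 m n) _).
by rewrite ler_pdivrMr ?ltr0n // ler_peMr ?ler1n // addr_ge0 ?q_ge0.
Qed.

Let entry_sym m n : entry n m = (entry m n)^*.
Proof. by rewrite /entry !rmorphM /= conjCK (geC0_conj (k_ge0 m n)) k_sym; ring. Qed.

Let entry_nb m n : entry m n != 0 -> n \in nb m.
Proof. by rewrite /entry mulf_eq0 negb_or => /andP[_ /kh_nb]. Qed.

Let qf_entries m : qf m = \sum_(n <- nb m) entry m n.
Proof. by rewrite /qf mulr_sumr. Qed.

Let nb_fset (B : {fset I}) : {fset I} := seq_fset tt (flatten [seq nb m | m <- B]).

Let mem_nb_fset B m n : m \in B -> n \in nb m -> n \in nb_fset B.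
Proof. by move=> mB nm; rewrite seq_fsetE; apply/flatten_mapP; exists m. Qed.

(* Partial sums of the form need not be real; their part inside B x B is, and the rest
   vanishes in the limit. *)
Let inner_sum (B : {fset I}) := \sum_(m <- B) \sum_(n <- B) entry m n.
Let boundary_sum (B : {fset I}) := \sum_(m <- B) \sum_(n <- nb m | n \notin B) entry m n.

Let psum_qf_split B : psum qf B = inner_sum B + boundary_sum B.
Proof.
rewrite /psum /inner_sum /boundary_sum -big_split; apply: eq_bigr => m _.
rewrite qf_entries (bigID (mem B)) /=; congr (_ + _).
rewrite -big_filter; apply: eq_sum_support; rewrite ?filter_uniq ?fset_uniq //.
by move=> n /entry_nb nbn; rewrite mem_filter nbn andbT.
Qed.

Let inner_sum_real B : inner_sum B \is Num.real.
Proof.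
apply/CrealP; rewrite /inner_sum rmorph_sum /=; under eq_bigr do rewrite rmorph_sum /=.
by rewrite exchange_big; apply: eq_bigr => n _; apply: eq_bigr => m _; rewrite -entry_sym.
Qed.

Let inner_sum_le B : inner_sum B <= psum uq B.
Proof.
pose d m n := k m n * q m.
have entry_le m n : `|entry m n| <= (d m n + d n m) / 2.
  by rewrite /d (k_sym n m) -mulrDr -mulrA; exact: norm_entry_le.
have d_sym : \sum_(m <- B) \sum_(n <- B) (d m n + d n m) / 2
           = \sum_(m <- B) \sum_(n <- B) d m n.
  under eq_bigr do rewrite -mulr_suml big_split /=.
  by rewrite -mulr_suml big_split /= [X in _ + X]exchange_big; field.
apply: le_trans (real_ler_norm (inner_sum_real B)) _.
apply: (@le_trans _ _ (\sum_(m <- B) \sum_(n <- B) (d m n + d n m) / 2)).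
  apply: le_trans (ler_norm_sum _ _ _) (ler_sum _ _) => m _.
  by apply: le_trans (ler_norm_sum _ _ _) (ler_sum _ _) => n _.
rewrite d_sym /psum; apply: ler_sum => m _; rewrite /d -mulr_suml /uq.
rewrite ler_wpM2r ?q_ge0 // (le_trans _ (rowsum_le m)) //.
by apply: ler_sum_support; rewrite ?fset_uniq // => n _ /k_nb.
Qed.

Let norm_boundary_sum_le (A B : {fset I}) : (A `|` nb_fset A `<=` B)%fset ->
  `|boundary_sum B| <= psum uq (B `\` A)%fset + psum uq (nb_fset B `\` B)%fset.
Proof.
move=> /fsubsetP AB.
pose h n := if n \in B then 0 else q n.
have h0 n : 0 <= h n by rewrite /h; case: ifP => _; rewrite ?q_ge0.
have -> : boundary_sum B
    = \sum_(m <- (B `\` A)%fset) \sum_(n <- nb m | n \notin B) entry m n.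
  apply: eq_sum_support; rewrite ?fset_uniq // => m.
  rewrite in_fsetD; case: (boolP (m \in A)) => [mA|_]; last by [].
  rewrite big_seq_cond big1 ?eqxx // => n /andP[nm /negP[]].
  by apply: AB; rewrite in_fsetU (mem_nb_fset mA nm) orbT.
apply: le_trans (ler_norm_sum _ _ _) _.
apply: (@le_trans _ _ (\sum_(m <- (B `\` A)%fset) \sum_(n <- nb m) k m n * (q m + h n))).
  apply: ler_sum => m _; apply: le_trans (ler_norm_sum _ _ _) _.
  rewrite big_mkcond /=; apply: ler_sum => n _; rewrite /h.
  case: (n \in B) => /=; last exact: norm_entry_le_sum.
  by rewrite addr0 mulr_ge0 ?k_ge0 ?q_ge0.
apply: le_trans (sum_nb_le (E := (nb_fset B `\` B)%fset) _ _ q_ge0 h0 _) _.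
- exact: fset_uniq.
- exact: fset_uniq.
- move=> m n; rewrite in_fsetD => /andP[_ mB] khn.
  rewrite in_fsetD (mem_nb_fset mB (kh_nb khn)) andbT.
  by move: khn; rewrite /h; case: (n \in B); rewrite // mulr0 eqxx.
rewrite /psum lerD // big_seq [leRHS]big_seq; apply: ler_sum => n.
by rewrite in_fsetD /h => /andP[/negbTE -> _].
Qed.

Let boundary_sum_cvg0 : boundary_sum @ totally --> 0.
Proof.
apply/cvgr0Pnorm_lt => eps eps_gt0.
have [A tail] := psum_tail_lt uq_ge0 uq_cvg (divr_gt0 eps_gt0 (ltr0n _ 2)).
apply: (near_totally (A := (A `|` nb_fset A)%fset)) => B AB.
apply: le_lt_trans (norm_boundary_sum_le AB) _; rewrite [eps]splitr ltrD // tail // => i.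
  by rewrite in_fsetD => /andP[].
rewrite in_fsetD => /andP[iB _]; apply: contra iB => iA.
by apply: (fsubsetP AB); rewrite in_fsetU iA.
Qed.

Let cvg_psum_qf : cvg (psum qf @ totally).
Proof.
set L := lim (psum uq @ totally).
apply: (cvg_psum_norm (c := L + L)) => B.
apply: (@le_trans _ _ (\sum_(m <- B) \sum_(n <- nb m) k m n * (q m + q n))).
  apply: ler_sum => m _; rewrite qf_entries; apply: le_trans (ler_norm_sum _ _ _) _.
  by apply: ler_sum => n _; exact: norm_entry_le_sum.
apply: le_trans (sum_nb_le (E := nb_fset B) _ _ q_ge0 q_ge0 _) _.
- exact: fset_uniq.
- exact: fset_uniq.
- by move=> m n mB /kh_nb; exact: mem_nb_fset.
exact: lerD (psum_uq_le_lim B) (psum_uq_le_lim _).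
Qed.

Theorem schur_test :
  usum (fun m => (f m)^* * \sum_(n <- nb m) k m n * f n)
    <= usum (fun m => (f m)^* * (u m * f m)).
Proof.
have -> : (fun m => (f m)^* * (u m * f m)) = uq.
  by apply/funext => m; rewrite /uq /q normCKC mulrCA.
apply: (lim_totally_le (u := psum qf - boundary_sum) (v := psum uq)).
- have qf_cvg : (psum qf - boundary_sum) @ totally --> lim (psum qf @ totally) - 0.
    exact: cvgB cvg_psum_qf boundary_sum_cvg0.
  by rewrite subr0 in qf_cvg.
- exact: uq_cvg.
apply: (near_totally (A := fset0)) => B _.
by rewrite !fctE psum_qf_split addrK inner_sum_le.
Qed.

End SchurTest.

Section Configurations.
Variables (R : realType) (V : countType) (e : rel V) (M N : nat).
Hypothesis e_sym : forall x y, e x y = e y x.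
Variables (s : V -> seq V) (D : nat).
Hypothesis s_e : forall x y, e x y -> y \in s x.
Hypothesis size_s : forall x, (size (s x) <= D)%N.

Local Notation C := (Cc R).
Local Notation cfg := (config V M N).
Local Notation cv := (@cval V M N).
Local Notation adj := (@cadj V e M N).
Local Notation w := (@weight R V M N).

Definition moves (m : cfg) x y (n : cfg) : Prop :=
  e x y /\ cv m x = (cv n x).+1 /\ (cv m y).+1 = cv n y /\
  (forall z, z != x -> z != y -> cv m z = cv n z).

Lemma moves_neq m x y n : moves m x y n -> x != y.
Proof. by move=> [_ [mx [my _]]]; apply/eqP => xy; move: mx my; rewrite xy; lia. Qed.

Lemma moves_inj m x y n n' : moves m x y n -> moves m x y n' -> n = n'.
Proof.
move=> [_ [mx [my mz]]] [_ [mx' [my' mz']]]; apply/val_inj/fsfunP => z.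
rewrite -/(cv n z) -/(cv n' z).
case: (eqVneq z x) => [->|zx]; first by apply: succn_inj; rewrite -mx -mx'.
case: (eqVneq z y) => [->|zy]; first by rewrite -my -my'.
by rewrite -mz // -mz'.
Qed.

Lemma moves_sym m x y n : moves m x y n -> moves n y x m.
Proof.
move=> [exy [mx [my mz]]]; rewrite /moves e_sym mx -my; do 3!split => //.
by move=> z zy zx; rewrite mz.
Qed.

Lemma cadj_sym m n : adj m n -> adj n m.
Proof. by move=> [x [y /moves_sym mn]]; exists y, x. Qed.

Lemma cadj_irr m : ~ adj m m.
Proof. by move=> [x [y [_ [/n_Sn]]]]. Qed.

Definition supp (m : cfg) : seq V := finsupp (val m).

Lemma mem_supp m z : (z \in supp m) = (cv m z != 0%N).
Proof. exact: mem_finsupp. Qed.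

Lemma cval_le m z : (cv m z <= M)%N.
Proof.
case: (boolP (z \in supp m)) => [zm|]; first by case/andP: (valP m) => /allP/(_ z zm).
by rewrite mem_supp negbK => /eqP ->.
Qed.

Lemma size_supp m : (size (supp m) <= N)%N.
Proof.
case/andP: (valP m) => _ /eqP <-; rewrite -sum1_size /supp big_seq [leqRHS]big_seq.
by apply: leq_sum => z; rewrite mem_finsupp lt0n.
Qed.

Definition nbr (x : V) : seq V := [seq y <- undup (s x) | e x y].

Lemma mem_nbr x y : (y \in nbr x) = e x y.
Proof. by rewrite mem_filter mem_undup andb_idr //; apply: s_e. Qed.

Lemma nbr_uniq x : uniq (nbr x).
Proof. by rewrite filter_uniq ?undup_uniq. Qed.

Lemma size_nbr x : (size (nbr x) <= D)%N.
Proof.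
by rewrite size_filter (leq_trans (count_size _ _)) // (leq_trans (size_undup _)).
Qed.

Definition move_to (m : cfg) x y : cfg := xget m [set n | moves m x y n].

Lemma move_toP m x y n : moves m x y n -> move_to m x y = n.
Proof. by move=> mn; apply: xget_unique => // n' /moves_inj; apply. Qed.

Definition adj_configs (m : cfg) : seq cfg :=
  undup [seq move_to m x y | x <- supp m, y <- nbr x].

Lemma adj_configs_uniq m : uniq (adj_configs m).
Proof. exact: undup_uniq. Qed.

Lemma mem_adj_configs m n : adj m n -> n \in adj_configs m.
Proof.
move=> [x [y mn]]; have [exy [mx _]] := mn.
rewrite mem_undup -(move_toP mn); apply: allpairs_f_dep; last by rewrite mem_nbr.
by rewrite mem_supp mx.
Qed.

Lemma weight_factor k : (k < M)%N ->
  (M%:R / 2) * (k.+1 + k + 1)%:R - (k.+1 * k)%:R = (k.+1 * (M - k))%:R :> C.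
Proof.
move=> kM; have -> : (k.+1 + k + 1 = 2 * k.+1)%N by lia.
by rewrite !natrM natrB; [field | exact: ltnW].
Qed.

Lemma weight_moves m x y n : moves m x y n ->
  w m n = sqrtC (cv m x * (M - cv n x))%:R * sqrtC (cv n y * (M - cv m y))%:R.
Proof.
move=> mn; have xy := moves_neq mn; have [_ [mx [my mz]]] := mn.
have nx_lt : (cv n x < M)%N by have := cval_le m x; lia.
have my_lt : (cv m y < M)%N by have := cval_le n y; lia.
rewrite /weight big_fset_condE.
have -> : [fset z in (finsupp (val m) `|` finsupp (val n))%fset | cv m z != cv n z]%fset
          = [fset x; y]%fset.
  apply/fsetP => z; rewrite !inE /= !mem_finsupp -/(cv m z) -/(cv n z).
  case: (eqVneq z x) => [->|zx]; first by rewrite mx /=; lia.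
  case: (eqVneq z y) => [->|zy]; first by rewrite -my /= orbT; lia.
  by rewrite mz // eqxx andbF.
rewrite big_fsetU1 ?inE // big_seq_fset1 mx weight_factor // -my.
by rewrite (addnC (cv m y)) (mulnC (cv m y)) weight_factor.
Qed.

Lemma weight_moves_ge0 m x y n : moves m x y n -> 0 <= w m n.
Proof. by move/weight_moves ->; rewrite mulr_ge0 ?sqrtC_ge0 ?ler0n. Qed.

Lemma weight_moves_le m x y n : moves m x y n -> w m n <= (M * cv m x * (M - cv m y))%:R.
Proof.
move=> mn; rewrite (weight_moves mn); have [_ [mx [my _]]] := mn.
have := cval_le m x; have := cval_le n y.
rewrite -sqrtCM ?nnegrE ?ler0n // -natrM -[leRHS]sqrCK ?ler0n // -natrX.
rewrite ler_sqrtC ?nnegrE ?ler0n // ler_nat mx -my.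
set a := cv n x; set b := cv m y => le_b le_a.
have la : (a.+1 * (M - a) <= a.+1 * (M * a.+1))%N by rewrite leq_mul2l; nia.
have lb : (b.+1 * (M - b) <= M * (M - b) * (M - b))%N by rewrite leq_mul2r; nia.
by apply: leq_trans (leq_mul la lb) _; nia.
Qed.

Lemma weight_sym m n : w m n = w n m.
Proof.
rewrite /weight fsetUC; apply: eq_big => [z|z _]; first by rewrite eq_sym.
by rewrite (addnC (cv m z)) mulnC.
Qed.

Definition adj_weight (m n : cfg) : C := if `[< adj m n >] then w m n else 0.

Lemma adj_weight_ge0 m n : 0 <= adj_weight m n.
Proof. by rewrite /adj_weight; case: asboolP => // [[x [y /weight_moves_ge0]]]. Qed.

Lemma adj_weight_sym m n : adj_weight m n = adj_weight n m.
Proof.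
rewrite /adj_weight weight_sym.
by case: asboolP => [/cadj_sym/asboolT -> //|nmn]; case: asboolP => // /cadj_sym.
Qed.

Lemma adj_weight_supp m n : adj_weight m n != 0 -> n \in adj_configs m.
Proof.
by rewrite /adj_weight; case: asboolP => [/mem_adj_configs //|_]; rewrite eqxx.
Qed.

(* If no particle can move from x to y, then move_to returns m, which is not adjacent
   to m. *)
Lemma adj_weight_move_to_le m x y :
  adj_weight m (move_to m x y) <= (M * cv m x * (M - cv m y))%:R.
Proof.
rewrite /adj_weight /move_to; case: xgetP => [n _ mn|_].
  by case: asboolP => _; [exact: weight_moves_le | exact: ler0n].
by rewrite asboolF ?ler0n //; exact: cadj_irr.
Qed.

Local Notation VN := (@V_N R V e M N).

Definition supp_nbhd (m : cfg) : seq V :=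
  undup (supp m ++ flatten [seq nbr x | x <- supp m]).

Lemma edge_term_nat m x y :
  (M%:R / 2) * (cv m x + cv m y)%:R - (cv m x * cv m y)%:R
  = (cv m x * (M - cv m y) + cv m y * (M - cv m x))%:R / 2 :> C.
Proof.
have := cval_le m x; have := cval_le m y => le_y le_x.
by rewrite !natrD !natrM !natrB //; field.
Qed.

Lemma supp_nbhd_supp m x : x \in supp m -> x \in supp_nbhd m.
Proof. by rewrite mem_undup mem_cat => ->. Qed.

Lemma supp_nbhd_nbr m x y : x \in supp m -> e x y -> y \in supp_nbhd m.
Proof.
move=> xm exy; rewrite mem_undup mem_cat; apply/orP; right.
by apply/flatten_mapP; exists x; rewrite ?mem_nbr.
Qed.

Lemma V_N_supp_nbhd m : VN m = 2^-1 * \sum_(x <- supp_nbhd m) \sum_(y <- supp_nbhd m)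
  (if e x y then (cv m x * (M - cv m y) + cv m y * (M - cv m x))%:R / 2 else 0).
Proof.
rewrite /V_N (usum_seq (r := [seq (x, y) | x <- supp_nbhd m, y <- supp_nbhd m])).
- by rewrite big_allpairs; under eq_bigr do under eq_bigr do rewrite /= edge_term_nat.
- by apply: allpairs_uniq; rewrite ?undup_uniq // => -[? ?] [? ?].
move=> [x y] /=; case: ifP => exy; last by rewrite eqxx.
rewrite edge_term_nat; case: (boolP (x \in supp m)) => [xm _|].
  by apply: (allpairs_f pair); [exact: supp_nbhd_supp | exact: supp_nbhd_nbr exy].
rewrite mem_supp negbK => /eqP ->; rewrite mul0n add0n subn0.
case: (boolP (y \in supp m)) => [ym _|]; last first.
  by rewrite mem_supp negbK => /eqP ->; rewrite mul0n mul0r eqxx.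
apply: (allpairs_f pair); last exact: supp_nbhd_supp.
by apply: supp_nbhd_nbr ym _; rewrite e_sym.
Qed.

Lemma V_N_supp m :
  VN m = (\sum_(x <- supp m) \sum_(y <- nbr x) cv m x * (M - cv m y))%:R / 2.
Proof.
rewrite V_N_supp_nbhd; set T := supp_nbhd m.
pose P x y : C := if e x y then (cv m x * (M - cv m y))%:R else 0.
have -> : \sum_(x <- T) \sum_(y <- T)
    (if e x y then (cv m x * (M - cv m y) + cv m y * (M - cv m x))%:R / 2 else 0)
    = \sum_(x <- T) \sum_(y <- T) P x y.
  transitivity (\sum_(x <- T) \sum_(y <- T) (P x y + P y x) / 2).
    apply: eq_bigr => x _; apply: eq_bigr => y _.
    by rewrite /P (e_sym y x); case: (e x y); rewrite ?natrD // addr0 mul0r.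
  under eq_bigr do rewrite -mulr_suml big_split /=.
  by rewrite -mulr_suml big_split /= [X in _ + X]exchange_big; field.
have -> : \sum_(x <- T) \sum_(y <- T) P x y = \sum_(x <- supp m) \sum_(y <- T) P x y.
  apply: eq_sum_support; rewrite ?undup_uniq ?fset_uniq // => x.
  case: (boolP (x \in supp m)) => [xm _|]; first exact: supp_nbhd_supp.
  rewrite mem_supp negbK => /eqP mx0; rewrite big1 ?eqxx // => y _.
  by rewrite /P mx0 mul0n; case: ifP.
rewrite mulrC natr_sum; congr (_ / 2).
rewrite big_seq [RHS]big_seq; apply: eq_bigr => x xm.
rewrite natr_sum (@eq_sum_support _ _ T (nbr x)) ?undup_uniq ?nbr_uniq //; last first.
  move=> y; rewrite /P mem_nbr.
  by case: ifP => [exy _|_]; [exact: supp_nbhd_nbr xm exy | rewrite eqxx].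
by rewrite big_seq [RHS]big_seq; apply: eq_bigr => y; rewrite mem_nbr /P => ->.
Qed.

Lemma rowsum_adj_weight m :
  \sum_(n <- adj_configs m) adj_weight m n <= 2 * M%:R * VN m.
Proof.
apply: le_trans (ler_sum_undup _ (adj_weight_ge0 m)) _; rewrite big_allpairs_dep /=.
apply: (@le_trans _ _
    (\sum_(x <- supp m) \sum_(y <- nbr x) (M * cv m x * (M - cv m y))%:R)).
  by apply: ler_sum => x _; apply: ler_sum => y _; exact: adj_weight_move_to_le.
rewrite V_N_supp -mulrA mulrCA [2 * _]mulrC divfK ?pnatr_eq0 // natr_sum mulr_sumr.
apply: ler_sum => x _; rewrite natr_sum mulr_sumr.
by apply: ler_sum => y _; rewrite -natrM mulnA.
Qed.

Lemma V_N_bounds m : 0 <= VN m <= (N * D * M ^ 2)%:R.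
Proof.
rewrite V_N_supp divr_ge0 ?ler0n //= ler_pdivrMr ?ltr0n // -natrM ler_nat.
apply: (@leq_trans (\sum_(x <- supp m) D * M ^ 2)); last first.
  rewrite big_const_seq count_predT iter_addn_0.
  rewrite (leq_trans (leq_mul (leqnn _) (size_supp m))) //.
  by rewrite mulnC mulnA leq_pmulr.
apply: leq_sum => x _; apply: (@leq_trans (\sum_(y <- nbr x) M ^ 2)).
  by apply: leq_sum => y _; rewrite expnS expn1 leq_mul ?cval_le ?leq_subr.
by rewrite big_const_seq count_predT iter_addn_0 mulnC leq_mul2r size_nbr orbT.
Qed.

Lemma A_N_adj_configs (f : cfg -> C) m :
  A_N e f m = \sum_(n <- adj_configs m) adj_weight m n * f n.
Proof.
rewrite /A_N (usum_seq (adj_configs_uniq m)).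
  by apply: eq_bigr => n _; rewrite /adj_weight; case: asboolP; rewrite ?mul0r.
by move=> n; case: asboolP => [mn _|_]; [exact: mem_adj_configs | rewrite eqxx].
Qed.

Theorem qform_A_le (f : cfg -> C) :
  ell2_on setT f -> qform_A e f <= 2 * M%:R * qform_V e f.
Proof.
rewrite /ell2_on (_ : (fun i => _) = fun i => `|f i| ^+ 2); last first.
  by apply/funext => i; rewrite asboolT.
move=> q_cvg; have q_ge0 m : 0 <= `|f m| ^+ 2 by exact: exprn_ge0.
have twoM_ge0 : 0 <= 2 * M%:R :> C by rewrite mulr_ge0 ?ler0n.
have twoMV_bounds m : 0 <= 2 * M%:R * VN m <= 2 * M%:R * (N * D * M ^ 2)%:R.
  by have /andP[V0 Vle] := V_N_bounds m; rewrite mulr_ge0 //= ler_wpM2l.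
have -> : 2 * M%:R * qform_V e f = usum (fun m => (f m)^* * (2 * M%:R * VN m * f m)).
  rewrite /qform_V -usumZl; first by congr usum; apply/funext => m; rewrite mulrCA !mulrA.
  have fVf m : (f m)^* * (VN m * f m) = VN m * `|f m| ^+ 2 by rewrite normCKC mulrCA.
  by rewrite (funext fVf); apply: cvg_psum_mul_bounded V_N_bounds q_ge0 q_cvg.
have -> : qform_A e f
    = usum (fun m => (f m)^* * \sum_(n <- adj_configs m) adj_weight m n * f n).
  by congr usum; apply/funext => m; rewrite A_N_adj_configs.
apply: schur_test adj_weight_ge0 adj_weight_sym adj_configs_uniq adj_weight_supp _ _ _.
  exact: rowsum_adj_weight.
by apply: cvg_psum_mul_bounded twoMV_bounds q_ge0 q_cvg; rewrite mulr_ge0 ?ler0n.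
Qed.

End Configurations.

Section InducedSubgraph.
Variables (R : realType) (V : countType) (e : rel V) (M N : nat).
Variables (S : set (config V M N)) (f : config V M N -> Cc R).

Definition zero_ext (m : config V M N) : Cc R := if `[< S m >] then f m else 0.

Lemma qform_adjop_zero_ext : qform_adjop e S f = qform_A e zero_ext.
Proof.
congr usum; apply/funext => m; rewrite /zero_ext.
case: asboolP => Sm; last by rewrite conjC0 mul0r.
congr (_ * _); congr usum; apply/funext => n.
case: (asboolP (S n)) => Sn; case: (asboolP (cadj e m n)) => mn.
- by rewrite asboolT.
- by rewrite asboolF // => -[].
- by rewrite asboolF ?mulr0 // => -[].
- by rewrite asboolF // => -[].
Qed.

Lemma qform_V_on_zero_ext : qform_V_on e S f = qform_V e zero_ext.
Proof.
congr usum; apply/funext => m.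
by rewrite /zero_ext; case: asboolP; rewrite ?conjC0 ?mul0r.
Qed.

Lemma ell2_on_zero_ext : ell2_on S f -> ell2_on setT zero_ext.
Proof.
rewrite /ell2_on.
have -> : (fun m => if `[< setT m >] then `|zero_ext m| ^+ 2 else 0)
        = (fun m => if `[< S m >] then `|f m| ^+ 2 else 0) :> (_ -> Cc R).
  apply/funext => m; rewrite asboolT // /zero_ext.
  by case: asboolP; rewrite ?normr0 ?expr0n.
by [].
Qed.

End InducedSubgraph.

Theorem mainTheorem3 (R : realType) (V : countType) (e : rel V) (M N : nat) :
  simple_graph e -> connected_graph e -> bounded_degree e ->
  (forall f : config V M N -> Cc R, ell2_on setT f ->
     qform_A e f <= 2 * M%:R * qform_V e f) /\
  (forall (S : set (config V M N)) (f : config V M N -> Cc R), ell2_on S f ->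
     qform_adjop e S f <= 2 * M%:R * qform_V_on e S f).
Proof.
move=> [e_sym _] _ [D deg]; have [s s_deg] := choice deg.
have qform_le := qform_A_le (R := R) (M := M) (N := N) e_sym
  (fun x y => (s_deg x).2 y) (fun x => (s_deg x).1).
split=> [|S f /ell2_on_zero_ext f_l2]; first exact: qform_le.
by rewrite qform_adjop_zero_ext qform_V_on_zero_ext; exact: qform_le.
Qed.
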